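(* Let $n=2K$, let $m_1,\dots,m_n>0$ be fixed constants, and let $M=\{(x_1,\dots,x_n)\in\mathbb{R}^n: x_1<\dots<x_n\}$ carry the Poisson bracket determined by $\{x_i,x_k\}=\operatorname{sgn}(x_i-x_k)$, i.e. $\{f,g\}=\sum_{i,k}\operatorname{sgn}(x_i-x_k)\frac{\partial f}{\partial x_i}\frac{\partial g}{\partial x_k}$. Set $h_i=m_ie^{x_i}$, $g_i=m_ie^{-x_i}$ and $$H_j=\sum_{\substack{I,J\in\binom{[2K]}{j}\\ I<J}} h_I g_J,\qquad 1\le j\le K.$$ Then $\{H_i,H_j\}=0$ for all $1\le i,j\le K$.
   Context: $[k]=\{1,\dots,k\}$ and $\binom{[k]}{j}$ is the set of $j$-element subsets $I=\{i_1<\dots<i_j\}$ of $[k]$. For $I,J\in\binom{[k]}{j}$, $I<J$ (interlacing) means $i_1<j_1<i_2<j_2<\dots<i_j<j_j$. Also $h_I=h_{i_1}\cdots h_{i_j}$ and $g_J=g_{j_1}\cdots g_{j_j}$. (These $H_j$ are constants of motion of the conservative mCH peakon system $\dot x_j=2\sum_{k\ne j}m_jm_ke^{-|x_j-x_k|}+4\sum_{1\le i<j<k\le n}m_im_ke^{-|x_i-x_k|}$ on $M$.) *)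

From HB Require Import structures.
From mathcomp Require Import all_boot all_order all_algebra.
From mathcomp Require Import all_classical all_reals all_analysis.
Set Implicit Arguments. Unset Strict Implicit. Unset Printing Implicit Defensive.
Import Order.TTheory GRing.Theory Num.Theory.
Import numFieldNormedType.Exports.
Local Open Scope ring_scope.

Definition sorted_elts (n : nat) (I : {set 'I_n}) : seq nat :=
  sort leq [seq val i | i in I].

(* Interlacing I < J : i_1 < j_1 < i_2 < j_2 < ... < i_j < j_j
   (for sets of the same cardinality). *)
Definition interlace (n : nat) (I J : {set 'I_n}) : bool :=
  let s := sorted_elts I in
  let t := sorted_elts J in
  [&& size s == size t,
      all (fun r => nth 0%N s r < nth 0%N t r)%N (iota 0 (size s))
    & all (fun r => nth 0%N t r < nth 0%N s r.+1)%N (iota 0 (size s).-1)].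

Definition partial (R : realType) (n : nat) (i : 'I_n)
    (f : ('I_n -> R) -> R) (x : 'I_n -> R) : R :=
  derive1 (fun t : R => f (fun k => if k == i then t else x k)) (x i).

Definition pbracket (R : realType) (n : nat)
    (f g : ('I_n -> R) -> R) (x : 'I_n -> R) : R :=
  \sum_(i < n) \sum_(k < n)
    Num.sg (x i - x k) * partial i f x * partial k g x.

Definition Hj (R : realType) (n : nat) (m : 'I_n -> R) (j : nat)
    (x : 'I_n -> R) : R :=
  \sum_(I : {set 'I_n} | #|I| == j)
    \sum_(J : {set 'I_n} | (#|J| == j) && interlace I J)
      (\prod_(i in I) (m i * expR (x i))) *
      (\prod_(k in J) (m k * expR (- x k))).

(* Interlacing pairs (I, J) of j-subsets of [n] correspond to the 2j-subsets
   U = I u J (I and J being the elements of even and odd rank in U), so H_j is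
   the sum over |U| = 2j of w_U = m_U exp(sum_i e_U(i) x_i), where e_U(i) = +1
   or -1 alternately along U.  Hence {H_a, H_b} = sum_{U,V} w_U w_V omega(U,V)
   with omega(U,V) = sum_{i,k} sgn(i - k) e_U(i) e_V(k), which no longer
   depends on x, and the vanishing becomes an identity in the polynomial ring
   of the h_i and g_i.  Let F_N(p,q) be that sum restricted to subsets of the
   first N indices with |U| = p, |V| = q.  Adding the top index N to U shifts
   e_U by +-delta_N and multiplies w_U by h_N or g_N according to the parity of
   |U|; this expresses F_{N+1} through F_N and the sums Y_N(p) = sum_{|U|=p} w_U.
   Since these coefficients only depend on parities, induction on N shows that
   F_N(p, q-2) - F_N(p-2, q) is an explicit quadratic form in the Y_N, which
   vanishes for p, q even; as F_N(p, q) = 0 for p < 0, F_N(2a, 2b) = 0. *)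

From HB Require Import structures.
From mathcomp Require Import all_boot all_order all_algebra.
From mathcomp Require Import ring zify.
Import Order.TTheory GRing.Theory Num.Theory.
Set Implicit Arguments. Unset Strict Implicit. Unset Printing Implicit Defensive.

Lemma count_prefix T (x0 : T) (s : seq T) (P : pred T) r : (r <= size s)%N ->
  (forall k, (k < size s)%N -> P (nth x0 s k) = (k < r)%N) -> count P s = r.
Proof.
elim: s r => [|x s IHs] [|r] //= le_r_s Ps; rewrite (Ps 0%N) //=.
- by rewrite (IHs 0%N) // => k lt_k_s; exact: (Ps k.+1).
- by rewrite add1n (IHs r) // => k lt_k_s; exact: (Ps k.+1).
Qed.

Lemma nth_ltn_sorted (s : seq nat) i j : sorted ltn s ->
  (i < size s)%N -> (j < size s)%N -> (nth 0 s i < nth 0 s j)%N = (i < j)%N.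
Proof.
move=> ss lt_i_s lt_j_s; case: (ltngtP i j) => [lt_ij|lt_ji|-> ]; last by rewrite ltnn.
- exact: (sorted_ltn_nth ltn_trans).
- by apply/negbTE; rewrite -leqNgt ltnW //; exact: (sorted_ltn_nth ltn_trans).
Qed.

Lemma nth_leq_sorted (s : seq nat) i j : sorted ltn s ->
  (i < size s)%N -> (j < size s)%N -> (nth 0 s i <= nth 0 s j)%N = (i <= j)%N.
Proof. by move=> ss lt_i_s lt_j_s; rewrite leqNgt nth_ltn_sorted // -leqNgt. Qed.

Section SortedElements.
Variable n : nat.
Implicit Types (S U I J : {set 'I_n}) (u v : 'I_n).

Definition rank_in S u : nat := #|[set v in S | (v < u)%N]|.

Definition parity_part (b : bool) S : {set 'I_n} :=
  [set u in S | odd (rank_in S u) == b].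

Lemma sorted_elts_ltn S : sorted ltn (sorted_elts S).
Proof.
rewrite ltn_sorted_uniq_leq sort_uniq sort_sorted ?andbT; last exact: leq_total.
by rewrite map_inj_uniq ?enum_uniq //; exact: val_inj.
Qed.

Lemma uniq_sorted_elts S : uniq (sorted_elts S).
Proof. by have := sorted_elts_ltn S; rewrite ltn_sorted_uniq_leq => /andP[]. Qed.

Lemma size_sorted_elts S : size (sorted_elts S) = #|S|.
Proof. by rewrite size_sort size_map cardE. Qed.

Lemma mem_sorted_elts S u : (val u \in sorted_elts S) = (u \in S).
Proof. by rewrite mem_sort (mem_map val_inj) mem_enum. Qed.

Lemma sorted_elts_bounded S k : k \in sorted_elts S -> (k < n)%N.
Proof. by rewrite mem_sort => /mapP[i _ ->]; exact: ltn_ord. Qed.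

Lemma rank_inE S u : rank_in S u = count (fun k => k < val u)%N (sorted_elts S).
Proof.
rewrite /rank_in /sorted_elts (permP (permEl (perm_sort _ _))) count_map cardE -size_filter.
apply/perm_size/uniq_perm; [exact: enum_uniq | exact/filter_uniq/enum_uniq |].
by move=> v; rewrite mem_enum mem_filter mem_enum !inE andbC.
Qed.

Lemma rank_in_lt S u : u \in S -> (rank_in S u < #|S|)%N.
Proof.
move=> uS; apply: proper_card; apply/properP; split.
  by apply/subsetP => v; rewrite inE => /andP[].
by exists u; rewrite // inE ltnn andbF.
Qed.

Lemma nth_rank_in S u : u \in S -> nth 0 (sorted_elts S) (rank_in S u) = val u.
Proof.
move=> uS; have ss := sorted_elts_ltn S.
have us : val u \in sorted_elts S by rewrite mem_sorted_elts.
rewrite rank_inE (@count_prefix _ 0 _ _ (index (val u) (sorted_elts S))) ?nth_index //.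
  by rewrite ltnW // index_mem.
by move=> k lt_k; rewrite -{1}(nth_index 0 us) nth_ltn_sorted ?index_mem.
Qed.

Lemma eq_nth_sorted_elts S u k : (k < #|S|)%N ->
  (val u == nth 0 (sorted_elts S) k) = (u \in S) && (rank_in S u == k).
Proof.
move=> lt_k_S; apply/eqP/andP => [eu|[uS /eqP <-]]; last by rewrite nth_rank_in.
have uS : u \in S by rewrite -mem_sorted_elts eu mem_nth // size_sorted_elts.
split=> //; have := nth_rank_in uS; rewrite eu => /eqP.
by rewrite nth_uniq ?uniq_sorted_elts ?size_sorted_elts ?rank_in_lt.
Qed.

Lemma sorted_eltsE S (l : seq nat) : sorted ltn l -> all (fun k => k < n)%N l ->
  (forall u, (val u \in l) = (u \in S)) -> sorted_elts S = l.
Proof.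
move=> sl l_bounded mem_l; have := sl; rewrite ltn_sorted_uniq_leq => /andP[ul sl'].
rewrite -[RHS](sorted_sort leq_trans sl').
apply/perm_sortP; [exact: leq_total | exact: leq_trans | exact: anti_leq |].
apply: uniq_perm => //; first by rewrite map_inj_uniq ?enum_uniq //; exact: val_inj.
move=> k; apply/mapP/idP => [[u uS ->]|kl]; first by rewrite mem_l -mem_enum.
by exists (Ordinal (allP l_bounded k kl)); rewrite ?mem_enum -?mem_l.
Qed.

Lemma parity_partsU S : parity_part false S :|: parity_part true S = S.
Proof. by apply/setP => u; rewrite !inE -andb_orr; case: (odd _); rewrite ?orbT andbT. Qed.

Lemma card_parity_parts S : (#|parity_part false S| + #|parity_part true S|)%N = #|S|.
Proof.
rewrite -(cardsID [set u | odd (rank_in S u)] S) addnC.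
by congr (_ + _)%N; apply: eq_card => u; rewrite !inE; case: (odd _); rewrite ?andbT ?andbF.
Qed.

Lemma sorted_elts_parity_part S j (b : bool) : #|S| = (2 * j)%N ->
  sorted_elts (parity_part b S) = [seq nth 0 (sorted_elts S) (2 * r + b) | r <- iota 0 j].
Proof.
move=> card_S; set s := sorted_elts S.
have size_s : size s = (2 * j)%N by rewrite size_sorted_elts.
apply: sorted_eltsE.
- apply/(sortedP 0) => r; rewrite size_map size_iota => lt_r.
  rewrite !(nth_map 0) ?size_iota ?nth_iota ?add0n; try lia.
  rewrite /= nth_ltn_sorted ?size_s ?sorted_elts_ltn //; case: b; lia.
- apply/allP => k /mapP[r]; rewrite mem_iota => /andP[_ lt_r] ->.
  by apply: (@sorted_elts_bounded S); apply: mem_nth; rewrite size_s; case: b; lia.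
move=> u; rewrite inE; apply/mapP/andP => [[r]|[uS /eqP odd_rk]].
  rewrite mem_iota => /andP[_ lt_r] /eqP.
  rewrite eq_nth_sorted_elts ?card_S; last by case: b; lia.
  by case/andP=> -> /eqP ->; rewrite oddD oddM; case: b.
have := rank_in_lt uS; rewrite card_S => lt_rk.
exists (rank_in S u)./2; first by rewrite mem_iota; lia.
apply/eqP; rewrite eq_nth_sorted_elts ?card_S; last by lia.
by rewrite uS /= mul2n -odd_rk addnC odd_double_half.
Qed.

Lemma parity_parts_interlace S j : #|S| = (2 * j)%N ->
  [/\ #|parity_part false S| = j, #|parity_part true S| = j
    & interlace (parity_part false S) (parity_part true S)].
Proof.
move=> card_S; have ss := sorted_elts_ltn S.
have size_s : size (sorted_elts S) = (2 * j)%N by rewrite size_sorted_elts.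
have card_part b : #|parity_part b S| = j.
  by rewrite -size_sorted_elts (sorted_elts_parity_part b card_S) size_map size_iota.
split=> //; rewrite /interlace !(sorted_elts_parity_part _ card_S) !size_map size_iota eqxx /=.
apply/andP; split; apply/allP => r; rewrite mem_iota => /andP[_ lt_r].
  rewrite !(nth_map 0) ?size_iota ?nth_iota ?add0n; try lia.
  by rewrite nth_ltn_sorted ?size_s //; lia.
rewrite !(nth_map 0) ?size_iota ?nth_iota ?add0n; try lia.
by rewrite nth_ltn_sorted ?size_s //; lia.
Qed.

Lemma rank_inU I J u : [disjoint I & J] ->
  rank_in (I :|: J) u = (rank_in I u + rank_in J u)%N.
Proof.
move=> disj; rewrite /rank_in; apply/eqP.
have -> : [set v in I :|: J | (v < u)%N] =
    [set v in I | (v < u)%N] :|: [set v in J | (v < u)%N].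
  by apply/setP => v; rewrite !inE andb_orl.
rewrite (leq_card_setU _ _).2; apply/pred0P => v /=; rewrite !inE.
by apply/negP => /andP[/andP[vI _] /andP[vJ _]]; rewrite (disjointFr disj vI) in vJ.
Qed.

Lemma interlace_parity_parts I J : interlace I J ->
  parity_part false (I :|: J) = I /\ parity_part true (I :|: J) = J.
Proof.
rewrite /interlace; set s := sorted_elts I; set t := sorted_elts J.
have ss : sorted ltn s := sorted_elts_ltn I.
have st : sorted ltn t := sorted_elts_ltn J.
case/and3P=> /eqP size_st /allP s_lt_t /allP t_lt_s.
have size_s : size s = #|I| by rewrite size_sorted_elts.
have size_t : size t = #|I| by rewrite -size_st.
have t_lt_s' k r : (k < r)%N -> (r < #|I|)%N -> (nth 0 t k < nth 0 s r)%N.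
  move=> lt_kr lt_r; apply: (@leq_trans (nth 0 s k.+1)).
    by apply: t_lt_s; rewrite mem_iota; lia.
  by rewrite nth_leq_sorted ?size_s //; lia.
have s_lt_t' r k : (r <= k)%N -> (k < #|I|)%N -> (nth 0 s r < nth 0 t k)%N.
  move=> le_rk lt_k; apply: (@leq_ltn_trans (nth 0 s k)).
    by rewrite nth_leq_sorted ?size_s //; lia.
  by apply: s_lt_t; rewrite mem_iota; lia.
have rank_J u : u \in I -> rank_in J u = rank_in I u.
  move=> uI; have lt_r := rank_in_lt uI.
  rewrite rank_inE -(nth_rank_in uI) -/s -/t; apply: (@count_prefix _ 0); rewrite size_t.
    exact: ltnW.
  move=> k lt_k; case: (ltnP k (rank_in I u)) => [lt_kr|le_rk].
    by rewrite t_lt_s'.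
  by apply/negbTE; rewrite -leqNgt ltnW // s_lt_t'.
have rank_I u : u \in J -> rank_in I u = (rank_in J u).+1.
  move=> uJ; have := rank_in_lt uJ; rewrite -size_sorted_elts -/t size_t => lt_r.
  rewrite rank_inE -(nth_rank_in uJ) -/s -/t; apply: (@count_prefix _ 0); rewrite size_s //.
  move=> k lt_k; rewrite ltnS; case: (leqP k (rank_in J u)) => [le_kr|lt_rk].
    by rewrite s_lt_t'.
  by apply/negbTE; rewrite -leqNgt ltnW // t_lt_s'.
have disj : [disjoint I & J].
  by apply/pred0P => u /=; apply/andP => -[uI uJ]; move: (rank_J u uI); rewrite rank_I //; lia.
split; apply/setP => u; rewrite !inE rank_inU //.
  case: (boolP (u \in I)) => [uI|_] /=; first by rewrite rank_J // addnn odd_double.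
  by case: (boolP (u \in J)) => // uJ; rewrite rank_I // addSn addnn /= odd_double.
case: (boolP (u \in I)) => [uI|_] /=.
  by rewrite rank_J // addnn odd_double (disjointFr disj uI).
by case: (boolP (u \in J)) => // uJ; rewrite rank_I // addSn addnn /= odd_double.
Qed.
End SortedElements.

Local Open Scope ring_scope.

Definition oddz (k : int) : bool := odd `|k|%N.

Lemma oddzB1 (k : int) : oddz (k - 1) = ~~ oddz k.
Proof.
rewrite /oddz; case: k => [[|k]|k] //.
  have -> : k.+1%:Z - 1 = k by lia.
  by rewrite /= negbK.
have -> : Negz k - 1 = Negz k.+1 by lia.
by [].
Qed.

Lemma oddz_eq0 (k : int) : oddz k -> (k == 0) = false.
Proof. by apply: contraTF => /eqP ->. Qed.

Lemma oddz_double (k : nat) : oddz (2 * k)%N = false.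
Proof. by rewrite /oddz oddM. Qed.

Section Below.
Variable n : nat.
Implicit Types U V : {set 'I_n}.

Definition below (N : nat) : {set 'I_n} := [set i : 'I_n | (i < N)%N].

Lemma subset_below_n U : U \subset below n.
Proof. by apply/subsetP => i _; rewrite inE. Qed.

Lemma notin_below (o : 'I_n) U : U \subset below o -> o \notin U.
Proof. by move=> sU; apply/negP => /(subsetP sU); rewrite inE ltnn. Qed.

Lemma below_top U (o : 'I_n) :
  o \in U -> (forall u, u \in U -> (u <= o)%N) -> U :\ o \subset below o.
Proof.
move=> oU o_max; apply/subsetP => u; rewrite !inE => /andP[neq_uo uU].
by rewrite ltn_neqAle o_max // andbT; apply: contra neq_uo => /eqP/val_inj ->.
Qed.

Lemma top_ind (P : {set 'I_n} -> Prop) : P set0 ->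
    (forall (o : 'I_n) U, U \subset below o -> P U -> P (o |: U)) ->
  forall U, P U.
Proof.
move=> P0 Ptop U; elim: {U}_.+1 {-2}U (ltnSn #|U|) => // N IHN U card_U.
have [->|[u0 u0U]] := set_0Vmem U; first exact: P0.
case: (arg_maxnP val u0U) => o oU o_max; have {}oU : o \in U := oU.
rewrite -(setD1K oU); apply: Ptop; first exact: below_top.
by apply: IHN; move: card_U; rewrite (cardsD1 o U) oU.
Qed.

Lemma subset_below0 U : (U \subset below 0) = (U == set0).
Proof.
apply/idP/eqP => [sU|->]; last exact: sub0set.
by apply/setP => i; rewrite inE; apply/negP => /(subsetP sU); rewrite inE.
Qed.

Lemma below_succ (o : 'I_n) : below o.+1 = o |: below o.
Proof. by apply/setP => i; rewrite !inE ltnS leq_eqVlt. Qed.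

Lemma subset_below_succ (o : 'I_n) U :
  (U \subset below o.+1) && (o \notin U) = (U \subset below o).
Proof.
rewrite below_succ; apply/andP/idP => [[sU oU]|sU]; last first.
  by rewrite notin_below // (subset_trans sU) // subsetUr.
apply/subsetP => u uU; have := subsetP sU u uU; rewrite !inE.
by case: eqP => [eq_uo|//]; rewrite -eq_uo uU in oU.
Qed.

Lemma cardz_setU1 (o : 'I_n) U (p : int) : o \notin U ->
  (#|o |: U|%:Z == p) = (#|U|%:Z == p - 1).
Proof.
by move=> oU; rewrite cardsU1 oU add1n -addn1 PoszD [RHS]eq_sym subr_eq [RHS]eq_sym.
Qed.

Lemma sum_below_succ (R : nmodType) (o : 'I_n) (p : int) (G : {set 'I_n} -> R) :
  \sum_(U : {set 'I_n} | (U \subset below o.+1) && (#|U|%:Z == p)) G U =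
  \sum_(U : {set 'I_n} | (U \subset below o) && (#|U|%:Z == p)) G U +
  \sum_(U : {set 'I_n} | (U \subset below o) && (#|U|%:Z == p - 1)) G (o |: U).
Proof.
rewrite (bigID (fun U => o \in U)) /= addrC; congr (_ + _).
  by apply: eq_bigl => U; rewrite andbAC subset_below_succ.
rewrite (reindex_onto (fun U => o |: U) (fun U => U :\ o)) /=; last first.
  by move=> U /andP[_ oU]; rewrite setD1K.
apply: eq_bigl => U; rewrite setU11 andbT; case: (boolP (o \in U)) => oU.
  have -> : ((o |: U) :\ o == U) = false.
    by apply/negbTE; apply: contraTN oU => /eqP <-; rewrite setD11.
  by rewrite andbF; apply/esym/negbTE; apply: contraL oU => /andP[/notin_below].
rewrite setU1K // eqxx andbT cardz_setU1 // subUset sub1set inE ltnSn /=.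
by rewrite -subset_below_succ oU andbT.
Qed.

Lemma rank_in_setU1 (o : 'I_n) U u : U \subset below o -> u \in U ->
  rank_in (o |: U) u = rank_in U u.
Proof.
move=> sU uU; apply: eq_card => v; rewrite !inE; case: eqP => [->|//] /=.
have := subsetP sU u uU; rewrite inE => lt_uo.
by rewrite ltnNge (ltnW lt_uo) andbF.
Qed.

Lemma rank_in_setU1_top (o : 'I_n) U : U \subset below o -> rank_in (o |: U) o = #|U|.
Proof.
move=> sU; apply: eq_card => v; rewrite !inE; case: eqP => [->|_] /=.
  by rewrite ltnn (negbTE (notin_below sU)).
by case: (boolP (v \in U)) => // vU; have := subsetP sU v vU; rewrite inE => ->.
Qed.

End Below.

Arguments below {n} N.

Section AlternatingWeight.
Variables (R : comNzRingType) (n : nat) (h g : 'I_n -> R).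
Implicit Types (U V : {set 'I_n}) (i k o : 'I_n).

Definition rank_sign U i : R := if i \in U then (-1) ^+ rank_in U i else 0.

Definition alt_weight U : R :=
  \prod_(u in U) (if odd (rank_in U u) then g u else h u).

Definition sgn_ord i k : R := (k < i)%N%:R - (i < k)%N%:R.

Definition omega U V : R :=
  \sum_i \sum_k sgn_ord i k * rank_sign U i * rank_sign V k.

Definition top_weight o (k : int) : R := if oddz k then g o else h o.

Definition signz (k : int) : R := if oddz k then -1 else 1.

Lemma signz_nat (k : nat) : (-1) ^+ k = signz k.
Proof. by rewrite /signz /oddz -signr_odd; case: (odd k). Qed.

Lemma rank_sign_setU1 o U i : U \subset below o ->
  rank_sign (o |: U) i = rank_sign U i + (i == o)%:R * (-1) ^+ #|U|.
Proof.
move=> sU; rewrite /rank_sign !inE; case: eqP => [->|_] /=.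
  by rewrite (negbTE (notin_below sU)) rank_in_setU1_top // add0r mul1r.
by rewrite mul0r addr0; case: ifP => // iU; rewrite rank_in_setU1.
Qed.

Lemma rank_sign_notin U i : i \notin U -> rank_sign U i = 0.
Proof. by rewrite /rank_sign => /negbTE ->. Qed.

Lemma alt_weight_setU1 o U : U \subset below o ->
  alt_weight (o |: U) = top_weight o #|U| * alt_weight U.
Proof.
move=> sU; rewrite /alt_weight big_setU1 ?notin_below //= rank_in_setU1_top //.
by congr (_ * _); apply: eq_bigr => u uU; rewrite rank_in_setU1.
Qed.

Lemma sum_rank_sign U : \sum_i rank_sign U i = (oddz #|U|)%:R.
Proof.
elim/top_ind: U => [|o U sU IHU].
  by rewrite cards0 big1 // => i _; rewrite rank_sign_notin ?inE.
rewrite (eq_bigr _ (fun i _ => rank_sign_setU1 i sU)) big_split /= IHU.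
rewrite (bigD1 o) //= eqxx mul1r big1 ?addr0 => [|i /negbTE ->]; last by rewrite mul0r.
rewrite cardsU1 notin_below // add1n signz_nat /signz /oddz /=.
by case: (odd #|U|); rewrite ?addrN ?add0r.
Qed.

Lemma sgn_ordC i k : sgn_ord i k = - sgn_ord k i.
Proof. by rewrite /sgn_ord opprB. Qed.

Lemma omegaC U V : omega V U = - omega U V.
Proof.
rewrite /omega exchange_big -sumrN; apply: eq_bigr => k _; rewrite -sumrN.
by apply: eq_bigr => i _; rewrite sgn_ordC; ring.
Qed.

Lemma omega_setU1 o U V : U \subset below o ->
  omega (o |: U) V = omega U V + (-1) ^+ #|U| * \sum_k sgn_ord o k * rank_sign V k.
Proof.
move=> sU; rewrite /omega.
under eq_bigr => i _ do under eq_bigr => k _ do rewrite rank_sign_setU1 // !mulrDr mulrDl.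
rewrite (eq_bigr _ (fun i _ => big_split _ _ _ _ _)) big_split /=; congr (_ + _).
rewrite (bigD1 o) //= [X in _ + X]big1 ?addr0; last first.
  by move=> i /negbTE io; apply: big1 => k _; rewrite io mul0r mulr0 mul0r.
by rewrite big_distrr /=; apply: eq_bigr => k _; rewrite eqxx mul1r; ring.
Qed.

Lemma sum_sgn_ord_below o V : V \subset below o ->
  \sum_k sgn_ord o k * rank_sign V k = (oddz #|V|)%:R.
Proof.
move=> sV; rewrite -sum_rank_sign; apply: eq_bigr => k _.
case: (boolP (k \in V)) => kV; last by rewrite rank_sign_notin // mulr0.
have := subsetP sV k kV; rewrite inE /sgn_ord => lt_ko.
by rewrite lt_ko ltnNge (ltnW lt_ko) subr0 mul1r.
Qed.

Lemma sum_sgn_ord_setU1 o V : V \subset below o ->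
  \sum_k sgn_ord o k * rank_sign (o |: V) k = \sum_k sgn_ord o k * rank_sign V k.
Proof.
move=> sV; rewrite (eq_bigr _ (fun k _ => congr1 _ (rank_sign_setU1 k sV))).
rewrite (bigD1 o) //= [RHS](bigD1 o) //= /sgn_ord ltnn subrr !mul0r !add0r.
by apply: eq_bigr => k /negbTE ->; rewrite mul0r addr0.
Qed.

Lemma omega_setU1r o U V : V \subset below o ->
  omega U (o |: V) = omega U V - (-1) ^+ #|V| * \sum_k sgn_ord o k * rank_sign U k.
Proof. by move=> sV; rewrite omegaC omega_setU1 // omegaC opprD opprK. Qed.

Definition weight_sum (N : nat) (p : int) : R :=
  \sum_(U : {set 'I_n} | (U \subset below N) && (#|U|%:Z == p)) alt_weight U.

Definition omega_sum (N : nat) (p q : int) : R :=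
  \sum_(U : {set 'I_n} | (U \subset below N) && (#|U|%:Z == p))
   \sum_(V : {set 'I_n} | (V \subset below N) && (#|V|%:Z == q))
     alt_weight U * alt_weight V * omega U V.

Lemma weight_sum_succ o p :
  weight_sum o.+1 p = weight_sum o p + top_weight o (p - 1) * weight_sum o (p - 1).
Proof.
rewrite /weight_sum sum_below_succ big_distrr; congr (_ + _).
by apply: eq_bigr => U /andP[sU /eqP <-]; exact: alt_weight_setU1.
Qed.

Lemma omega_sum_addC N p q (c : R) :
  \sum_(U : {set 'I_n} | (U \subset below N) && (#|U|%:Z == p))
   \sum_(V : {set 'I_n} | (V \subset below N) && (#|V|%:Z == q))
     alt_weight U * alt_weight V * (omega U V + c) =
  omega_sum N p q + c * weight_sum N p * weight_sum N q.
Proof.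
rewrite /omega_sum /weight_sum -mulrA big_distrlr big_distrr -big_split /=.
apply: eq_bigr => U _; rewrite big_distrr -big_split /=.
by apply: eq_bigr => V _; ring.
Qed.

Lemma omega_sum_top_r o p q :
  \sum_(U : {set 'I_n} | (U \subset below o) && (#|U|%:Z == p))
   \sum_(V : {set 'I_n} | (V \subset below o) && (#|V|%:Z == q - 1))
     alt_weight U * alt_weight (o |: V) * omega U (o |: V) =
  top_weight o (q - 1) * (omega_sum o p (q - 1)
    - signz (q - 1) * (oddz p)%:R * weight_sum o p * weight_sum o (q - 1)).
Proof.
rewrite -!mulNr -omega_sum_addC big_distrr /=; apply: eq_bigr => U /andP[sU /eqP eU].
rewrite big_distrr /=; apply: eq_bigr => V /andP[sV /eqP eV].
rewrite alt_weight_setU1 // omega_setU1r // sum_sgn_ord_below // signz_nat eU eV; ring.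
Qed.

Lemma omega_sum_top_l o p q :
  \sum_(U : {set 'I_n} | (U \subset below o) && (#|U|%:Z == p - 1))
   \sum_(V : {set 'I_n} | (V \subset below o) && (#|V|%:Z == q))
     alt_weight (o |: U) * alt_weight V * omega (o |: U) V =
  top_weight o (p - 1) * (omega_sum o (p - 1) q
    + signz (p - 1) * (oddz q)%:R * weight_sum o (p - 1) * weight_sum o q).
Proof.
rewrite -omega_sum_addC big_distrr /=; apply: eq_bigr => U /andP[sU /eqP eU].
rewrite big_distrr /=; apply: eq_bigr => V /andP[sV /eqP eV].
rewrite alt_weight_setU1 // omega_setU1 // sum_sgn_ord_below // signz_nat eU eV; ring.
Qed.

Lemma omega_sum_top_lr o p q :
  \sum_(U : {set 'I_n} | (U \subset below o) && (#|U|%:Z == p - 1))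
   \sum_(V : {set 'I_n} | (V \subset below o) && (#|V|%:Z == q - 1))
     alt_weight (o |: U) * alt_weight (o |: V) * omega (o |: U) (o |: V) =
  top_weight o (p - 1) * top_weight o (q - 1) * (omega_sum o (p - 1) (q - 1)
    + (signz (p - 1) * (oddz (q - 1))%:R - signz (q - 1) * (oddz (p - 1))%:R)
      * weight_sum o (p - 1) * weight_sum o (q - 1)).
Proof.
rewrite -omega_sum_addC big_distrr /=; apply: eq_bigr => U /andP[sU /eqP eU].
rewrite big_distrr /=; apply: eq_bigr => V /andP[sV /eqP eV].
rewrite !alt_weight_setU1 // omega_setU1 // sum_sgn_ord_setU1 // omega_setU1r //.
by rewrite !sum_sgn_ord_below // !signz_nat eU eV; ring.
Qed.

Lemma omega_sum_succ o p q : omega_sum o.+1 p q =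
  omega_sum o p q
  + top_weight o (q - 1) * (omega_sum o p (q - 1)
    - signz (q - 1) * (oddz p)%:R * weight_sum o p * weight_sum o (q - 1))
  + top_weight o (p - 1) * (omega_sum o (p - 1) q
    + signz (p - 1) * (oddz q)%:R * weight_sum o (p - 1) * weight_sum o q)
  + top_weight o (p - 1) * top_weight o (q - 1) * (omega_sum o (p - 1) (q - 1)
    + (signz (p - 1) * (oddz (q - 1))%:R - signz (q - 1) * (oddz (p - 1))%:R)
      * weight_sum o (p - 1) * weight_sum o (q - 1)).
Proof.
rewrite {1}/omega_sum sum_below_succ -[RHS]addrA.
rewrite -omega_sum_top_r -omega_sum_top_l -omega_sum_top_lr.
by congr (_ + _); rewrite /omega_sum -big_split; apply: eq_bigr => U _; exact: sum_below_succ.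
Qed.

Lemma weight_sum0 p : weight_sum 0 p = (p == 0)%:R.
Proof.
rewrite /weight_sum (eq_bigl (fun U => (U == set0) && (p == 0))); last first.
  by move=> U; rewrite subset_below0; case: eqP => // ->; rewrite cards0 eq_sym.
case: (p =P 0) => _; last by rewrite big_pred0 // => U; rewrite andbF.
by rewrite (big_pred1 set0) => [|U]; rewrite ?andbT // /alt_weight big_set0.
Qed.

Lemma omega_sum0 p q : omega_sum 0 p q = 0.
Proof.
rewrite /omega_sum big1 // => U /andP[]; rewrite subset_below0 => /eqP -> _.
rewrite big1 // => V _; rewrite /omega big1 ?mulr0 // => i _.
by rewrite big1 // => k _; rewrite rank_sign_notin ?inE // mulr0 mul0r.
Qed.

Lemma omega_sum_neg N p q : p < 0 -> omega_sum N p q = 0.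
Proof.
move=> p_neg; rewrite /omega_sum big_pred0 // => U.
by apply/negbTE/nandP; right; apply: contraTN p_neg => /eqP <-.
Qed.

Definition shift_defect (N : nat) (p q : int) : R :=
  if oddz p && ~~ oddz q then
    weight_sum N p * weight_sum N (q - 2) - weight_sum N (p - 1) * weight_sum N (q - 1)
  else if ~~ oddz p && oddz q then
    weight_sum N (p - 2) * weight_sum N q - weight_sum N (p - 1) * weight_sum N (q - 1)
  else 0.

Lemma omega_sum_shift N : (N <= n)%N -> forall p q : int,
  omega_sum N p (q - 2) - omega_sum N (p - 2) q = shift_defect N p q.
Proof.
have sub2 (k : int) : k - 2 = k - 1 - 1 by lia.
elim: N => [_ p q|N IHN lt_Nn p q].
  rewrite !omega_sum0 subrr /shift_defect !weight_sum0 !sub2.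
  case: (boolP (oddz p)) => odd_p; case: (boolP (oddz q)) => odd_q //=.
    by rewrite (oddz_eq0 odd_p) (@oddz_eq0 (q - 1)) ?oddzB1 // !mul0r mulr0 subrr.
  by rewrite (oddz_eq0 odd_q) (@oddz_eq0 (p - 1)) ?oddzB1 // !mul0r mulr0 subrr.
pose o := Ordinal lt_Nn; have {IHN}IH := IHN (ltnW lt_Nn); rewrite (_ : N = o) // in IH *.
have IH' p' q' : omega_sum o p' (q' - 1 - 1) =
    omega_sum o (p' - 1 - 1) q' + shift_defect o p' q'.
  by rewrite -!sub2 -IH [RHS]addrC subrK.
rewrite !sub2 !omega_sum_succ IH' (IH' p (q - 1)) (IH' (p - 1) q) (IH' (p - 1) (q - 1)).
rewrite /shift_defect !weight_sum_succ !sub2 /top_weight /signz !oddzB1.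
by case: (oddz p); case: (oddz q); rewrite /=; ring.
Qed.

Lemma omega_sum_even N a b : (N <= n)%N -> omega_sum N (2 * a)%N (2 * b)%N = 0.
Proof.
have double_sub2 (k : nat) : (2 * k.+1)%N%:Z - 2 = (2 * k)%N by lia.
move=> le_Nn; elim: a b => [|a IHa] b.
  have := omega_sum_shift le_Nn 0 (2 * b.+1)%N.
  by rewrite /shift_defect oddz_double double_sub2 (@omega_sum_neg N (0 - 2)) // subr0 muln0.
have := omega_sum_shift le_Nn (2 * a.+1)%N (2 * b.+1)%N.
by rewrite /shift_defect !oddz_double !double_sub2 IHa subr0.
Qed.

End AlternatingWeight.

Arguments rank_sign {R n} U i.
Arguments sgn_ord {R n} i k.
Arguments omega {R n} U V.

From mathcomp Require Import boolp functions reals normedtype sequences derive exp realfun.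
Import numFieldNormedType.Exports.

Section Bracket.
Variables (R : realType) (n : nat) (m : 'I_n -> R).
Implicit Types (x : 'I_n -> R) (U V : {set 'I_n}).

Definition exp_weight x U : R :=
  alt_weight (fun u => m u * expR (x u)) (fun u => m u * expR (- x u)) U.

Lemma Hj_exp_weight x j :
  Hj m j x = \sum_(U : {set 'I_n} | #|U| == (2 * j)%N) exp_weight x U.
Proof.
rewrite /Hj pair_big_dep /=.
rewrite (reindex_onto (fun U => (parity_part false U, parity_part true U))
  (fun IJ => IJ.1 :|: IJ.2)) /=; last first.
  by move=> [I J] /= /and3P[_ _ /interlace_parity_parts[-> ->]].
apply: eq_big => [U|U _].
  rewrite parity_partsU eqxx andbT; apply/idP/eqP => [/and3P[/eqP ev /eqP od _]|card_U].
    by rewrite -card_parity_parts ev od addnn -mul2n.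
  by case: (parity_parts_interlace card_U) => -> -> ->; rewrite !eqxx.
rewrite /exp_weight /alt_weight [RHS](bigID (fun u => odd (rank_in U u))) /= [RHS]mulrC.
congr (_ * _); apply: eq_big => u; rewrite inE; try by case: (odd _); rewrite ?andbT ?andbF.
all: by case/andP => _ /eqP ->.
Qed.

Lemma exp_weightE x U :
  exp_weight x U = (\prod_(u in U) m u) * expR (\sum_i rank_sign U i * x i).
Proof.
have -> : \sum_i rank_sign U i * x i = \sum_(i in U) rank_sign U i * x i.
  rewrite [LHS](bigID (mem U)) /= [X in _ + X]big1 ?addr0 // => i /rank_sign_notin ->.
  by rewrite mul0r.
rewrite expR_sum -big_split /=; apply: eq_bigr => u uU.
by rewrite /rank_sign uU -signr_odd; case: (odd _); rewrite ?expr1 ?expr0 ?mulN1r ?mul1r.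
Qed.

Lemma is_derive_scaled_expR (a C L e : R) :
  is_derive a 1 (fun t => C * expR (L + e * (t - a))) (e * (C * expR L)).
Proof.
have affine : is_derive a 1 (fun t => L + e * (t - a)) e.
  have -> : (fun t => L + e * (t - a)) = cst L + e \*: (@id R - cst a) by apply/funext.
  by apply: is_derive_eq; rewrite add0r subr0 /GRing.scale /= mulr1.
have -> : (fun t => C * expR (L + e * (t - a))) =
    C \*: (expR \o (fun t => L + e * (t - a))) by apply/funext.
have := is_derive1_comp (is_derive_expR _) affine => /(is_deriveZ C)/is_derive_eq; apply.
by rewrite subrr mulr0 addr0 /GRing.scale /=; ring.
Qed.

Lemma sum_rank_sign_update x i t U :
  \sum_k rank_sign U k * (if k == i then t else x k) =
  \sum_k rank_sign U k * x k + rank_sign U i * (t - x i).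
Proof.
rewrite (bigD1 i) //= [X in _ = X + _](bigD1 i) //= eqxx.
have -> : \sum_(k | k != i) rank_sign U k * (if k == i then t else x k) =
    \sum_(k | k != i) rank_sign U k * x k by apply: eq_bigr => k /negbTE ->.
ring.
Qed.

Lemma is_derive_exp_weight x i U :
  is_derive (x i) 1 (fun t => exp_weight (fun k => if k == i then t else x k) U)
    (rank_sign U i * exp_weight x U).
Proof.
have -> : (fun t => exp_weight (fun k => if k == i then t else x k) U) =
    fun t => (\prod_(u in U) m u) *
      expR (\sum_k rank_sign U k * x k + rank_sign U i * (t - x i)).
  by apply/funext => t; rewrite exp_weightE sum_rank_sign_update.
by rewrite exp_weightE; apply: is_derive_scaled_expR.
Qed.

Lemma is_derive_sum_pred (I : finType) (P : pred I) (f : I -> R -> R) (df : I -> R) (a : R) :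
  (forall i, is_derive a 1 (f i) (df i)) ->
  is_derive a 1 (fun t => \sum_(i | P i) f i t) (\sum_(i | P i) df i).
Proof.
move=> f_df; have -> : (fun t => \sum_(i | P i) f i t) = \sum_(i | P i) f i.
  by apply/funext => t; rewrite fct_sumE.
apply: (big_rec2 (fun F dF => is_derive a 1 F dF)) => [|i F dF _ F_dF].
  exact: is_derive_cst.
exact: is_deriveD.
Qed.

Lemma partial_Hj x i j : partial i (Hj m j) x =
  \sum_(U : {set 'I_n} | #|U| == (2 * j)%N) rank_sign U i * exp_weight x U.
Proof.
rewrite /partial derive1E; apply: derive_val.
under [fun t => _]funext => t do rewrite Hj_exp_weight.
by apply: is_derive_sum_pred => U; exact: is_derive_exp_weight.
Qed.

Lemma sg_sgn_ord x i k : (forall i k : 'I_n, (i < k)%N -> x i < x k) ->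
  Num.sg (x i - x k) = sgn_ord i k.
Proof.
move=> x_incr; rewrite /sgn_ord; case: (ltngtP i k) => [lt_ik|lt_ki|/val_inj ->] /=.
- by rewrite sub0r ltr0_sg // subr_lt0 x_incr.
- by rewrite subr0 gtr0_sg // subr_gt0 x_incr.
- by rewrite !subrr sgr0.
Qed.

Lemma pbracket_Hj x a b : (forall i k : 'I_n, (i < k)%N -> x i < x k) ->
  pbracket (Hj m a) (Hj m b) x =
  \sum_(U : {set 'I_n} | #|U| == (2 * a)%N) \sum_(V : {set 'I_n} | #|V| == (2 * b)%N)
    exp_weight x U * exp_weight x V * omega U V.
Proof.
move=> x_incr; rewrite /pbracket.
transitivity (\sum_i \sum_k \sum_(U : {set 'I_n} | #|U| == (2 * a)%N)
    \sum_(V : {set 'I_n} | #|V| == (2 * b)%N)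
      sgn_ord i k * (rank_sign U i * exp_weight x U) * (rank_sign V k * exp_weight x V)).
  apply: eq_bigr => i _; apply: eq_bigr => k _.
  rewrite sg_sgn_ord // !partial_Hj -mulrA big_distrlr big_distrr /=.
  by apply: eq_bigr => U _; rewrite big_distrr /=; apply: eq_bigr => V _; rewrite mulrA.
under eq_bigr => i _ do rewrite exchange_big.
rewrite exchange_big; under eq_bigr => U _ do under eq_bigr => i _ do rewrite exchange_big.
under eq_bigr => U _ do rewrite exchange_big.
apply: eq_bigr => U _; apply: eq_bigr => V _; rewrite /omega big_distrr /=.
by apply: eq_bigr => i _; rewrite big_distrr /=; apply: eq_bigr => k _; ring.
Qed.

Lemma pbracket_Hj_omega_sum x a b : (forall i k : 'I_n, (i < k)%N -> x i < x k) ->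
  pbracket (Hj m a) (Hj m b) x =
  omega_sum (fun u => m u * expR (x u)) (fun u => m u * expR (- x u)) n (2 * a)%N (2 * b)%N.
Proof.
move=> x_incr; rewrite pbracket_Hj // /omega_sum.
apply: eq_big => [U|U _]; first by rewrite eqz_nat subset_below_n.
by apply: eq_bigl => V; rewrite eqz_nat subset_below_n.
Qed.

End Bracket.

Unset Implicit Arguments.

Theorem theorem4 (R : realType) (K : nat) (m : 'I_(2 * K) -> R)
    (hm : forall i, 0 < m i)
    (x : 'I_(2 * K) -> R)
    (hx : forall i k : 'I_(2 * K), (i < k)%N -> x i < x k)
    (a b : nat) (ha : (1 <= a <= K)%N) (hb : (1 <= b <= K)%N) :
  pbracket (Hj m a) (Hj m b) x = 0.
Proof.
by rewrite pbracket_Hj_omega_sum // omega_sum_even.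
Qed.
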